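(* The category $\mathbf{Frm}$ of frames and frame morphisms is equivalent to the category $\mathbf{Cons}$ of constructible algebras and constructible morphisms.
   Context: An interior algebra is a pair $(A,\square)$ with $A$ a boolean algebra and $\square:A\to A$ satisfying $\square 1=1$, $\square(a\wedge b)=\square a\wedge\square b$, $\square a\le a$, $\square a\le\square\square a$; $\mathcal O A=\{a:\square a=a\}$ is the set of open elements. $A$ is essential if the boolean subalgebra of $A$ generated by $\mathcal O A$ is all of $A$. A constructible algebra is an essential interior algebra $A$ such that the poset $\mathcal O A$ is a frame. A constructible morphism $f:A\to B$ between constructible algebras is a boolean homomorphism with $f(\square a)\le\square f(a)$ for all $a\in A$ (so $f$ maps opens to opens) such that $f|_{\mathcal O A}:\mathcal O A\to\mathcal O B$ is a frame morphism (preserves arbitrary joins and finite meets). *)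

From Stdlib Require Import ProofIrrelevance.
Set Implicit Arguments.
Unset Strict Implicit.

Record Poset := {
  pcar :> Type;
  ple : pcar -> pcar -> Prop;
  ple_refl : forall x, ple x x;
  ple_trans : forall x y z, ple x y -> ple y z -> ple x z;
  ple_antisym : forall x y, ple x y -> ple y x -> x = y }.

Definition is_lub (P : Poset) (S : P -> Prop) (x : P) : Prop :=
  (forall s, S s -> ple s x) /\
  (forall y, (forall s, S s -> ple s y) -> ple x y).

Definition is_glb2 (P : Poset) (a b m : P) : Prop :=
  ple m a /\ ple m b /\ (forall y, ple y a -> ple y b -> ple y m).

Definition is_top (P : Poset) (t : P) : Prop := forall y, ple y t.

Definition is_frame (P : Poset) : Prop :=
  (forall S : P -> Prop, exists x, is_lub S x) /\
  (forall a b : P, exists m, is_glb2 a b m) /\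
  (forall (a : P) (S : P -> Prop) (j m : P),
      is_lub S j -> is_glb2 a j m ->
      is_lub (fun y => exists s, S s /\ is_glb2 a s y) m).

Definition image (A B : Type) (f : A -> B) (S : A -> Prop) : B -> Prop :=
  fun y => exists x, S x /\ f x = y.

Definition frame_morphism (P Q : Poset) (f : P -> Q) : Prop :=
  (forall (S : P -> Prop) (j : P), is_lub S j -> is_lub (image f S) (f j)) /\
  (forall a b m : P, is_glb2 a b m -> is_glb2 (f a) (f b) (f m)) /\
  (forall t : P, is_top t -> is_top (f t)).

Record Frame := { frm_poset :> Poset; frm_is_frame : is_frame frm_poset }.

Record FrmHom (L M : Frame) := {
  frmh :> L -> M;
  frmh_morph : frame_morphism frmh }.

Record BoolAlg := {
  ba_poset :> Poset;
  bmeet : ba_poset -> ba_poset -> ba_poset;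
  bjoin : ba_poset -> ba_poset -> ba_poset;
  btop : ba_poset;
  bbot : ba_poset;
  bcompl : ba_poset -> ba_poset;
  bmeet_glb : forall a b, is_glb2 a b (bmeet a b);
  bjoin_lub : forall a b, is_lub (fun x => x = a \/ x = b) (bjoin a b);
  btop_top : forall a, ple a btop;
  bbot_bot : forall a, ple bbot a;
  bdistr : forall a b c, bmeet a (bjoin b c) = bjoin (bmeet a b) (bmeet a c);
  bcompl_meet : forall a, bmeet a (bcompl a) = bbot;
  bcompl_join : forall a, bjoin a (bcompl a) = btop }.

Definition bool_hom (A B : BoolAlg) (f : A -> B) : Prop :=
  (forall a b, f (bmeet a b) = bmeet (f a) (f b)) /\
  (forall a b, f (bjoin a b) = bjoin (f a) (f b)) /\
  (forall a, f (bcompl a) = bcompl (f a)) /\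
  f (btop A) = btop B /\ f (bbot A) = bbot B.

Record InteriorAlg := {
  ia_ba :> BoolAlg;
  box : ia_ba -> ia_ba;
  box_top : box (btop ia_ba) = btop ia_ba;
  box_meet : forall a b, box (bmeet a b) = bmeet (box a) (box b);
  box_deflate : forall a, ple (box a) a;
  box_idem : forall a, ple (box a) (box (box a)) }.

Definition open_car (A : InteriorAlg) : Type := { a : A | box a = a }.

Definition open_le (A : InteriorAlg) (x y : open_car A) : Prop :=
  ple (proj1_sig x) (proj1_sig y).

Lemma open_le_refl (A : InteriorAlg) (x : open_car A) : open_le x x.
Proof. apply ple_refl. Qed.

Lemma open_le_trans (A : InteriorAlg) (x y z : open_car A) :
  open_le x y -> open_le y z -> open_le x z.
Proof. apply ple_trans. Qed.


Lemma open_le_antisym (A : InteriorAlg) (x y : open_car A) :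
  open_le x y -> open_le y x -> x = y.
Proof.
  destruct x as [x hx], y as [y hy]; unfold open_le; simpl; intros h1 h2.
  pose proof (ple_antisym h1 h2) as e; subst y.
  rewrite (ProofIrrelevance.proof_irrelevance _ hx hy). reflexivity.
Qed.

Definition opens (A : InteriorAlg) : Poset :=
  {| pcar := open_car A; ple := @open_le A;
     ple_refl := @open_le_refl A; ple_trans := @open_le_trans A;
     ple_antisym := @open_le_antisym A |}.

Definition in_gen_by_opens (A : InteriorAlg) (a : A) : Prop :=
  forall P : A -> Prop,
    (forall x, box x = x -> P x) ->
    (forall x y, P x -> P y -> P (bmeet x y)) ->
    (forall x y, P x -> P y -> P (bjoin x y)) ->
    (forall x, P x -> P (bcompl x)) ->
    P (btop A) -> P (bbot A) -> P a.

Definition essential (A : InteriorAlg) : Prop :=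
  forall a : A, in_gen_by_opens a.

Record ConsAlg := {
  cons_ia :> InteriorAlg;
  cons_essential : essential cons_ia;
  cons_frame : is_frame (opens cons_ia) }.

Lemma box_le_open (A B : InteriorAlg) (f : A -> B)
  (hf : forall a, ple (f (box a)) (box (f a))) (a : A) :
  box a = a -> box (f a) = f a.
Proof.
  intro ha. apply ple_antisym.
  - apply box_deflate.
  - pose proof (hf a) as h. rewrite ha in h. exact h.
Qed.

Definition open_restr (A B : InteriorAlg) (f : A -> B)
  (hf : forall a, ple (f (box a)) (box (f a))) : opens A -> opens B :=
  fun x => exist _ (f (proj1_sig x)) (box_le_open hf (proj2_sig x)).

Record ConsHom (A B : ConsAlg) := {
  consh :> A -> B;
  consh_bool : bool_hom consh;
  consh_box : forall a, ple (consh (box a)) (box (consh a));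
  consh_frame : frame_morphism (open_restr consh_box) }.

(* Morphisms are compared through their underlying functions (pointwise). *)
Definition equivalence_Frm_Cons : Prop :=
  exists (F : Frame -> ConsAlg)
         (Fm : forall L M : Frame, FrmHom L M -> ConsHom (F L) (F M))
         (G : ConsAlg -> Frame)
         (Gm : forall A B : ConsAlg, ConsHom A B -> FrmHom (G A) (G B))
         (eta : forall L : Frame, FrmHom L (G (F L)))
         (eta' : forall L : Frame, FrmHom (G (F L)) L)
         (eps : forall A : ConsAlg, ConsHom (F (G A)) A)
         (eps' : forall A : ConsAlg, ConsHom A (F (G A))),
    (forall (L : Frame) (h : FrmHom L L),
        (forall x, h x = x) -> forall y, Fm L L h y = y) /\
    (forall (L M N : Frame) (h : FrmHom L M) (k : FrmHom M N) (hk : FrmHom L N),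
        (forall x, hk x = k (h x)) ->
        forall y, Fm L N hk y = Fm M N k (Fm L M h y)) /\
    (forall (A : ConsAlg) (h : ConsHom A A),
        (forall x, h x = x) -> forall y, Gm A A h y = y) /\
    (forall (A B C : ConsAlg) (h : ConsHom A B) (k : ConsHom B C) (hk : ConsHom A C),
        (forall x, hk x = k (h x)) ->
        forall y, Gm A C hk y = Gm B C k (Gm A B h y)) /\
    (* eta : Id ~> G F is a natural isomorphism *)
    (forall L x, eta' L (eta L x) = x) /\
    (forall L y, eta L (eta' L y) = y) /\
    (forall (L M : Frame) (h : FrmHom L M) x,
        Gm (F L) (F M) (Fm L M h) (eta L x) = eta M (h x)) /\
    (* eps : F G ~> Id is a natural isomorphism *)
    (forall A x, eps' A (eps A x) = x) /\
    (forall A y, eps A (eps' A y) = y) /\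
    (forall (A B : ConsAlg) (h : ConsHom A B) x,
        h (eps A x) = eps B (Fm (G A) (G B) (Gm A B h) x)).

From Stdlib Require Import ProofIrrelevance FunctionalExtensionality ClassicalEpsilon List.
Import ListNotations.
Set Implicit Arguments.
Unset Strict Implicit.

(* The inverse of [A |-> O A] is the Booleanization: a frame [L] freely generates a
   Boolean algebra [B L] whose elements are finite joins of differences [u /\ ~ v]
   with [u, v] in [L]. Sending [f] to the largest element of [L] below it is an
   interior operator on [B L] whose opens are exactly [L], and [B L] is generated by
   them. For a constructible algebra [A], evaluating formal differences of opens in [A]
   is an order embedding [B (O A) -> A], onto because [A] is generated by [O A].
   Frame morphisms extend termwise to [B], constructible morphisms restrict to opens,
   and the unit [L ~ O (B L)] and counit [B (O A) ~ A] are natural isomorphisms. *)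

Tactic Notation "via" constr(y) := apply (ple_trans (y := y)).

Lemma proj1_sig_inj (T : Type) (P : T -> Prop) (x y : {a | P a}) :
  proj1_sig x = proj1_sig y -> x = y.
Proof.
  destruct x as [x hx], y as [y hy]; simpl; intros e; subst y.
  f_equal; apply proof_irrelevance.
Qed.

Lemma lub_unique (P : Poset) (S : P -> Prop) x y : is_lub S x -> is_lub S y -> x = y.
Proof. intros [h1 h2] [h3 h4]; apply ple_antisym; auto. Qed.

Lemma glb2_unique (P : Poset) (a b x y : P) : is_glb2 a b x -> is_glb2 a b y -> x = y.
Proof. intros (h1 & h2 & h3) (h4 & h5 & h6); apply ple_antisym; auto. Qed.

Lemma is_lub_ext (P : Poset) (S T : P -> Prop) x :
  (forall s, S s <-> T s) -> is_lub S x -> is_lub T x.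
Proof.
  intros e [h1 h2]; split.
  - intros s hs; apply h1, e, hs.
  - intros y hy; apply h2; intros s hs; apply hy, e, hs.
Qed.

(** * Distributive lattices and frames *)

Record DLattice := {
  dl_poset :> Poset;
  dmeet : dl_poset -> dl_poset -> dl_poset;
  djoin : dl_poset -> dl_poset -> dl_poset;
  dtop : dl_poset;
  dbot : dl_poset;
  dmeet_glb : forall a b, is_glb2 a b (dmeet a b);
  djoin_lub : forall a b, is_lub (fun x => x = a \/ x = b) (djoin a b);
  dtop_top : forall a, ple a dtop;
  dbot_bot : forall a, ple dbot a;
  ddistr : forall a b c, ple (dmeet a (djoin b c)) (djoin (dmeet a b) (dmeet a c)) }.

Section DLatticeTheory.
Variable D : DLattice.
Notation m := (@dmeet D).
Notation j := (@djoin D).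
Notation t := (@dtop D).
Notation b := (@dbot D).
Implicit Types x y z u v : D.

Lemma meet_le_l x y : ple (m x y) x. Proof. apply (dmeet_glb x y). Qed.
Lemma meet_le_r x y : ple (m x y) y. Proof. apply (dmeet_glb x y). Qed.
Lemma le_meet x y z : ple z x -> ple z y -> ple z (m x y). Proof. apply (dmeet_glb x y). Qed.
Lemma le_join_l x y : ple x (j x y). Proof. apply (djoin_lub x y); auto. Qed.
Lemma le_join_r x y : ple y (j x y). Proof. apply (djoin_lub x y); auto. Qed.
Lemma join_le x y z : ple x z -> ple y z -> ple (j x y) z.
Proof. intros h1 h2; apply (djoin_lub x y); intros s [-> | ->]; auto. Qed.
Lemma le_top x : ple x t. Proof. apply dtop_top. Qed.
Lemma bot_le x : ple b x. Proof. apply dbot_bot. Qed.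

Lemma meet_le_of_le_l x y z : ple x z -> ple (m x y) z.
Proof. intros h; via x; auto using meet_le_l. Qed.
Lemma meet_le_of_le_r x y z : ple y z -> ple (m x y) z.
Proof. intros h; via y; auto using meet_le_r. Qed.
Lemma le_join_of_le_l x y z : ple z x -> ple z (j x y).
Proof. intros h; via x; auto using le_join_l. Qed.
Lemma le_join_of_le_r x y z : ple z y -> ple z (j x y).
Proof. intros h; via y; auto using le_join_r. Qed.

Lemma meet_mono x y x' y' : ple x x' -> ple y y' -> ple (m x y) (m x' y').
Proof. intros; apply le_meet; [apply meet_le_of_le_l | apply meet_le_of_le_r]; auto. Qed.
Lemma join_mono x y x' y' : ple x x' -> ple y y' -> ple (j x y) (j x' y').
Proof. intros; apply join_le; [apply le_join_of_le_l | apply le_join_of_le_r]; auto. Qed.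

Lemma meet_join_distr_l x y z : ple (m x (j y z)) (j (m x y) (m x z)).
Proof. apply ddistr. Qed.

Lemma meet_join_distr_r x y z : ple (m (j y z) x) (j (m y x) (m z x)).
Proof.
  via (m x (j y z)); [apply le_meet; auto using meet_le_l, meet_le_r |].
  via (j (m x y) (m x z)); [apply meet_join_distr_l |].
  apply join_mono; apply le_meet; auto using meet_le_l, meet_le_r.
Qed.

Lemma le_of_cover x y z w : ple x (j y z) -> ple (m x y) w -> ple (m x z) w -> ple x w.
Proof.
  intros h1 h2 h3; via (m x (j y z)); [apply le_meet; auto using ple_refl |].
  via (j (m x y) (m x z)); [apply meet_join_distr_l | apply join_le; auto].
Qed.

Definition is_compl x y : Prop := ple (m x y) b /\ ple t (j x y).

Lemma compl_unique x y y' : is_compl x y -> is_compl x y' -> y = y'.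
Proof.
  assert (H : forall y y', is_compl x y -> is_compl x y' -> ple y y').
  { intros y0 y1 [h1 h2] [h3 h4]; apply (le_of_cover (y := x) (z := y1)).
    - via t; auto using le_top.
    - via b; [via (m x y0); auto; apply le_meet; auto using meet_le_l, meet_le_r |].
      apply bot_le.
    - apply meet_le_r. }
  intros; apply ple_antisym; auto.
Qed.

Lemma is_compl_join e e' c n :
  is_compl e e' -> is_compl c n -> is_compl (j e c) (m e' n).
Proof.
  intros [h1 h2] [h3 h4]; split.
  - via (j (m e (m e' n)) (m c (m e' n))); [apply meet_join_distr_r |].
    apply join_le.
    + via (m e e'); auto; apply meet_mono; auto using ple_refl, meet_le_l.
    + via (m c n); auto; apply meet_mono; auto using ple_refl, meet_le_r.
  - apply (le_of_cover (y := e) (z := e')); [via t; auto using le_top | |].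
    + apply meet_le_of_le_r, le_join_of_le_l, le_join_l.
    + apply (le_of_cover (y := c) (z := n)).
      * apply meet_le_of_le_l; via t; auto using le_top.
      * apply meet_le_of_le_r, le_join_of_le_l, le_join_r.
      * apply le_join_of_le_r, le_meet; [apply meet_le_of_le_l, meet_le_r | apply meet_le_r].
Qed.

End DLatticeTheory.

Section FrameOperations.
Variable L : Frame.
Implicit Types a c w x y z u v s : L.

Definition fsup (S : L -> Prop) : L :=
  proj1_sig (constructive_indefinite_description _ (proj1 (frm_is_frame L) S)).

Lemma fsup_spec S : is_lub S (fsup S).
Proof. unfold fsup; destruct constructive_indefinite_description; auto. Qed.
Lemma fsup_ub S x : S x -> ple x (fsup S).
Proof. apply fsup_spec. Qed.
Lemma fsup_least S y : (forall x, S x -> ple x y) -> ple (fsup S) y.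
Proof. apply fsup_spec. Qed.

Definition fmeet a c : L :=
  proj1_sig (constructive_indefinite_description _ (proj1 (proj2 (frm_is_frame L)) a c)).

Lemma fmeet_spec a c : is_glb2 a c (fmeet a c).
Proof. unfold fmeet; destruct constructive_indefinite_description; auto. Qed.

Lemma fmeet_comm_le a c : ple (fmeet a c) (fmeet c a).
Proof. destruct (fmeet_spec a c) as (h1 & h2 & _); apply (fmeet_spec c a); auto. Qed.

Definition fjoin a c := fsup (fun x => x = a \/ x = c).
Definition ftop := fsup (fun _ => True).
Definition fbot := fsup (fun _ => False).

Lemma fmeet_fsup_le T x z :
  (forall w, T w -> ple (fmeet w x) z) -> ple (fmeet (fsup T) x) z.
Proof.
  intros h; via (fmeet x (fsup T)); [apply fmeet_comm_le |].
  apply (proj2 (proj2 (frm_is_frame L)) x T _ _ (fsup_spec T) (fmeet_spec x (fsup T))).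
  intros y (s & hs & hg); rewrite (glb2_unique hg (fmeet_spec x s)).
  via (fmeet s x); [apply fmeet_comm_le | auto].
Qed.

Lemma fmeet_fjoin_distr a b c : ple (fmeet a (fjoin b c)) (fjoin (fmeet a b) (fmeet a c)).
Proof.
  via (fmeet (fjoin b c) a); [apply fmeet_comm_le |].
  apply fmeet_fsup_le; intros w [-> | ->].
  - via (fmeet a b); [apply fmeet_comm_le | apply fsup_ub; auto].
  - via (fmeet a c); [apply fmeet_comm_le | apply fsup_ub; auto].
Qed.

Canonical Structure frame_dlattice : DLattice :=
  {| dl_poset := L; dmeet := fmeet; djoin := fjoin; dtop := ftop; dbot := fbot;
     dmeet_glb := fmeet_spec;
     djoin_lub := fun a c => fsup_spec _;
     dtop_top := fun a => @fsup_ub (fun _ : L => True) a I;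
     dbot_bot := fun a => @fsup_least (fun _ : L => False) a (fun _ f => False_ind _ f);
     ddistr := fmeet_fjoin_distr |}.

Definition fimp a c := fsup (fun w => ple (fmeet w a) c).

Lemma fimp_spec w a c : ple w (fimp a c) <-> ple (fmeet w a) c.
Proof.
  split; intros h.
  - via (fmeet (fimp a c) a); [apply (@meet_mono frame_dlattice); auto using ple_refl |].
    apply fmeet_fsup_le; auto.
  - apply fsup_ub; auto.
Qed.

End FrameOperations.

Ltac lat :=
  first [ assumption
  | apply ple_refl
  | apply le_top
  | apply bot_le
  | match goal with
    | |- ple (djoin _ _) _ => apply join_le; lat
    | |- ple _ (dmeet _ _) => apply le_meet; lat
    | |- ple (dmeet _ _) _ => first [apply meet_le_of_le_l; lat | apply meet_le_of_le_r; lat]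
    | |- ple _ (djoin _ _) => first [apply le_join_of_le_l; lat | apply le_join_of_le_r; lat]
    | |- ple (fjoin _ _) _ => apply join_le; lat
    | |- ple _ (fmeet _ _) => apply le_meet; lat
    | |- ple (fmeet _ _) _ => first [apply meet_le_of_le_l; lat | apply meet_le_of_le_r; lat]
    | |- ple _ (fjoin _ _) => first [apply le_join_of_le_l; lat | apply le_join_of_le_r; lat]
    | |- ple (bjoin _ _) _ => apply join_le; lat
    | |- ple _ (bmeet _ _) => apply le_meet; lat
    | |- ple (bmeet _ _) _ => first [apply meet_le_of_le_l; lat | apply meet_le_of_le_r; lat]
    | |- ple _ (bjoin _ _) => first [apply le_join_of_le_l; lat | apply le_join_of_le_r; lat]
    end ].
(** * The Booleanization of a frame *)

Section FormalDifferences.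
Variable L : Frame.
Notation D := (frame_dlattice L).
Notation m := (@dmeet D).
Notation j := (@djoin D).
Notation tp := (@dtop D).
Notation bt := (@dbot D).
Implicit Types a c w x y z u v s t : D.

(* A list [C] of pairs [(s, t)] stands for the Boolean element [\/ (s /\ ~ t)].
   Such formal expressions are compared through [residual C z], the largest [w]
   with [w /\ C <= z]. *)
Fixpoint residual (C : list (L * L)) (z : L) : L :=
  match C with
  | [] => tp
  | (s, t) :: C' => m (fimp s (j t z)) (residual C' z)
  end.

Definition meets_below (C : list (L * L)) w z : Prop :=
  forall s t, In (s, t) C -> ple (m w s) (j t z).

Lemma le_residual C w z : ple w (residual C z) <-> meets_below C w z.
Proof.
  unfold meets_below; induction C as [| [u v] C IH]; cbn [residual].
  - split; [intros _ s t [] | intros _; lat].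
  - split.
    + intros h s t [e | hin].
      * injection e as <- <-; apply fimp_spec.
        via (m (fimp u (j v z)) (residual C z)); auto; lat.
      * apply IH; auto; via (m (fimp u (j v z)) (residual C z)); auto; lat.
    + intros h; apply le_meet.
      * apply fimp_spec, h; left; auto.
      * apply IH; intros s t hin; apply h; right; auto.
Qed.

Lemma meets_below_residual C z : meets_below C (residual C z) z.
Proof. apply le_residual, ple_refl. Qed.

(* [covers s t C] says [s /\ ~ t <= C]. *)
Definition covers s t (C : list (L * L)) : Prop :=
  forall z, ple (m s (residual C z)) (j t z).

Lemma covers_iff s t C :
  covers s t C <-> forall w z, meets_below C w z -> ple (m s w) (j t z).
Proof.
  split.
  - intros h w z g; via (m s (residual C z)); [apply meet_mono; [lat | apply le_residual; auto] | apply h].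
  - intros h z; apply h, meets_below_residual.
Qed.

Definition fle (X Y : list (L * L)) : Prop := forall z, ple (residual Y z) (residual X z).

Lemma fle_iff X Y : fle X Y <-> forall w z, meets_below Y w z -> meets_below X w z.
Proof.
  split.
  - intros h w z g; apply le_residual; via (residual Y z); [apply le_residual; auto | apply h].
  - intros h z; apply le_residual, h, meets_below_residual.
Qed.

Lemma fle_covers X Y : fle X Y <-> forall s t, In (s, t) X -> covers s t Y.
Proof.
  rewrite fle_iff; split.
  - intros h s t hin; apply covers_iff; intros w z g.
    via (m w s); [lat | apply (h w z g); auto].
  - intros h w z g s t hin; via (m s w); [lat | apply (proj1 (covers_iff s t Y) (h s t hin) w z g)].
Qed.

Lemma covers_nil s t : covers s t [] <-> ple s t.
Proof.
  rewrite covers_iff; unfold meets_below; split.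
  - intros h; via (m s tp); [lat |]; via (j t bt); [apply h; intros ? ? [] | lat].
  - intros h w z _; via s; [lat | via t; auto; lat].
Qed.

Lemma covers_cons s t u v C :
  covers s t ((u, v) :: C) <-> covers s (j t u) C /\ covers (m s v) t C.
Proof.
  rewrite !covers_iff; unfold meets_below; split.
  - intros h; split.
    + intros w z g; via (j t (j u z)); [| lat].
      apply h; intros s' t' [e | hin].
      * injection e as <- <-; via u; lat.
      * via (j t' z); auto; lat.
    + intros w z g; via (m s (m v w)); [lat |].
      apply h; intros s' t' [e | hin].
      * injection e as <- <-; lat.
      * via (m w s'); [lat | auto].
  - intros [h1 h2] w z g.
    assert (gu : ple (m w u) (j v z)) by (apply g; left; auto).
    assert (gC : forall s' t', In (s', t') C -> ple (m w s') (j t' z))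
      by (intros; apply g; right; auto).
    apply (@le_of_cover D) with (y := j t z) (z := u).
    + via (j (j t u) z); [apply h1; auto | lat].
    + lat.
    + apply (@le_of_cover D) with (y := v) (z := z).
      * via (m w u); lat.
      * via (m (m s v) w); [lat | apply h2; auto].
      * lat.
Qed.

Lemma covers_weaken s t s' t' C :
  covers s t C -> ple s' (j s t') -> ple (m s' t) t' -> covers s' t' C.
Proof.
  rewrite !covers_iff; intros h h1 h2 w z g.
  apply (@le_of_cover D) with (y := s) (z := t').
  - via s'; lat.
  - apply (@le_of_cover D) with (y := t) (z := z).
    + via (j t z); [via (m s w); [lat | apply h; auto] | lat].
    + via t'; [via (m s' t); lat | lat].
    + lat.
  - lat.
Qed.

Lemma covers_cut s t x C : covers s (j t x) C -> covers (m s x) t C -> covers s t C.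
Proof.
  rewrite !covers_iff; intros h1 h2 w z g.
  apply (@le_of_cover D) with (y := j t z) (z := x).
  - via (j (j t x) z); [apply h1; auto | lat].
  - lat.
  - via (m (m s x) w); [lat | apply h2; auto].
Qed.

Lemma covers_app_l s t C C' : covers s t C -> covers s t (C ++ C').
Proof.
  rewrite !covers_iff; intros h w z g; apply h; intros s' t' hin; apply g, in_or_app; auto.
Qed.

Lemma covers_app_r s t C C' : covers s t C' -> covers s t (C ++ C').
Proof.
  rewrite !covers_iff; intros h w z g; apply h; intros s' t' hin; apply g, in_or_app; auto.
Qed.

Lemma covers_mem s t C : In (s, t) C -> covers s t C.
Proof. rewrite covers_iff; intros hin w z g; via (m w s); [lat | apply g; auto]. Qed.

Definition shift u v (C : list (L * L)) : list (L * L) :=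
  map (fun q => (m u (fst q), j v (snd q))) C.

Lemma covers_shift s t u v C : covers s t C -> covers (m s u) (j t v) (shift u v C).
Proof.
  rewrite !covers_iff; intros h w z g.
  assert (g' : meets_below C (m u w) (j v z)).
  { intros a b hin.
    assert (hab : In (m u a, j v b) (shift u v C))
      by (apply in_map_iff; exists (a, b); auto).
    via (m w (m u a)); [lat |]; via (j (j v b) z); [apply g; auto | lat]. }
  via (m s (m u w)); [lat |]; via (j t (j v z)); [apply h; auto | lat].
Qed.

(* The formal meet [\/ (s_i /\ ~ t_i) /\ \/ (a_k /\ ~ b_k)
   = \/ ((s_i /\ a_k) /\ ~ (t_i \/ b_k))]. *)
Fixpoint prod_terms (C E : list (L * L)) : list (L * L) :=
  match C with
  | [] => []
  | (u, v) :: C' => shift u v E ++ prod_terms C' E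
  end.

Lemma in_prod_terms s t C E : In (s, t) (prod_terms C E) <->
  exists u v a b, In (u, v) C /\ In (a, b) E /\ s = m u a /\ t = j v b.
Proof.
  induction C as [| [u v] C IH]; cbn [prod_terms In].
  - split; [intros [] | intros (? & ? & ? & ? & [] & _)].
  - rewrite in_app_iff, IH; unfold shift; rewrite in_map_iff; split.
    + intros [([a b] & e & hin) | (u' & v' & a & b & h1 & h2 & h3 & h4)].
      * injection e as <- <-; exists u, v, a, b; auto.
      * exists u', v', a, b; auto.
    + intros (u' & v' & a & b & [e | h1] & h2 & h3 & h4).
      * injection e as -> ->; left; exists (a, b); subst; auto.
      * right; exists u', v', a, b; auto.
Qed.

Lemma covers_prod s t C E : covers s t C -> covers s t E -> covers s t (prod_terms C E).
Proof.
  revert s t; induction C as [| [u v] C IH]; intros s t h1 h2; cbn [prod_terms]; [exact h1 |].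
  apply covers_cons in h1 as [ha hb].
  apply covers_cut with (x := u).
  - apply covers_app_r, IH; auto; apply covers_weaken with s t; auto; lat.
  - apply covers_cut with (x := v).
    + apply covers_app_l; apply covers_weaken with (m s u) (j t v); [apply covers_shift; auto | lat | lat].
    + apply covers_app_r, IH.
      * apply covers_weaken with (m s v) t; auto; lat.
      * apply covers_weaken with s t; auto; lat.
Qed.

End FormalDifferences.
Section Booleanization.
Variable L : Frame.
Notation D := (frame_dlattice L).
Notation m := (@dmeet D).
Notation j := (@djoin D).
Notation tp := (@dtop D).
Notation bt := (@dbot D).
Notation fle := (@fle L).
Notation covers := (@covers L).
Notation residual := (@residual L).

(* Representing classes by the function [residual X] (rather than by a quotient)
   makes [fle]-equivalent lists literally equal. *)
Definition bcar := { f : L -> L | exists C, f = residual C }.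

Definition ble (f g : bcar) : Prop := forall z, ple (proj1_sig g z) (proj1_sig f z).

Lemma ble_refl f : ble f f.
Proof. intros z; apply ple_refl. Qed.

Lemma ble_trans f g h : ble f g -> ble g h -> ble f h.
Proof. intros h1 h2 z; via (proj1_sig g z); auto. Qed.

Lemma ble_antisym f g : ble f g -> ble g f -> f = g.
Proof.
  intros h1 h2; apply proj1_sig_inj, functional_extensionality; intros z.
  apply ple_antisym; auto.
Qed.

Definition bposet : Poset :=
  {| pcar := bcar; ple := ble; ple_refl := ble_refl; ple_trans := ble_trans;
     ple_antisym := ble_antisym |}.

Definition bclass (C : list (L * L)) : bposet := exist _ (residual C) (ex_intro _ C eq_refl).

Definition brepr (f : bposet) : list (L * L) :=
  proj1_sig (constructive_indefinite_description _ (proj2_sig f)).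

Lemma brepr_spec (f : bposet) : f = bclass (brepr f).
Proof.
  apply proj1_sig_inj; unfold brepr; destruct constructive_indefinite_description; auto.
Qed.

Lemma bclass_surj (f : bposet) : exists X, f = bclass X.
Proof. exists (brepr f); apply brepr_spec. Qed.

Lemma bclass_le X Y : ple (bclass X) (bclass Y) <-> fle X Y.
Proof. reflexivity. Qed.

Lemma bclass_eq X Y : fle X Y -> fle Y X -> bclass X = bclass Y.
Proof. intros; apply ple_antisym; auto. Qed.

Lemma fle_of_bclass_eq X Y : bclass X = bclass Y -> fle X Y.
Proof. intros e; change (ple (bclass X) (bclass Y)); rewrite e; apply ple_refl. Qed.

Lemma bclass_glb X Y : is_glb2 (bclass X) (bclass Y) (bclass (prod_terms X Y)).
Proof.
  split; [| split].
  - apply bclass_le, fle_covers; intros s t hin.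
    apply in_prod_terms in hin as (u & v & a & b & h1 & h2 & -> & ->).
    apply covers_weaken with u v; [apply covers_mem; auto | lat | lat].
  - apply bclass_le, fle_covers; intros s t hin.
    apply in_prod_terms in hin as (u & v & a & b & h1 & h2 & -> & ->).
    apply covers_weaken with a b; [apply covers_mem; auto | lat | lat].
  - intros f; destruct (bclass_surj f) as [Z ->].
    rewrite !bclass_le, !fle_covers; intros h1 h2 s t hin; apply covers_prod; auto.
Qed.

Lemma bclass_lub X Y :
  is_lub (fun x : bposet => x = bclass X \/ x = bclass Y) (bclass (X ++ Y)).
Proof.
  split.
  - intros f [-> | ->]; apply bclass_le, fle_covers; intros s t hin;
      apply covers_mem, in_or_app; auto.
  - intros f h; destruct (bclass_surj f) as [Z ->].
    pose proof (proj1 (fle_covers _ _) (h _ (or_introl eq_refl))) as h1.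
    pose proof (proj1 (fle_covers _ _) (h _ (or_intror eq_refl))) as h2.
    apply fle_covers; intros s t hin; apply in_app_or in hin as [hin | hin]; auto.
Qed.

Definition Bmeet (f g : bposet) : bposet := bclass (prod_terms (brepr f) (brepr g)).
Definition Bjoin (f g : bposet) : bposet := bclass (brepr f ++ brepr g).
Definition Btop : bposet := bclass [(tp, bt)].
Definition Bbot : bposet := bclass [].

Lemma Bmeet_glb f g : is_glb2 f g (Bmeet f g).
Proof. rewrite (brepr_spec f) at 1; rewrite (brepr_spec g) at 1; apply bclass_glb. Qed.

Lemma Bjoin_lub f g : is_lub (fun x => x = f \/ x = g) (Bjoin f g).
Proof.
  pose proof (bclass_lub (brepr f) (brepr g)) as H.
  rewrite <- (brepr_spec f), <- (brepr_spec g) in H; exact H.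
Qed.

Lemma Bmeet_bclass X Y : Bmeet (bclass X) (bclass Y) = bclass (prod_terms X Y).
Proof. apply (glb2_unique (Bmeet_glb _ _) (bclass_glb X Y)). Qed.

Lemma Bjoin_bclass X Y : Bjoin (bclass X) (bclass Y) = bclass (X ++ Y).
Proof. apply (lub_unique (Bjoin_lub _ _) (bclass_lub X Y)). Qed.

Lemma Btop_top f : ple f Btop.
Proof.
  destruct (bclass_surj f) as [X ->]; apply fle_covers; intros s t _.
  apply covers_cons; split; apply covers_nil; lat.
Qed.

Lemma Bbot_bot f : ple Bbot f.
Proof. destruct (bclass_surj f) as [X ->]; apply fle_covers; intros s t []. Qed.

Lemma Bdistr f g h : ple (Bmeet f (Bjoin g h)) (Bjoin (Bmeet f g) (Bmeet f h)).
Proof.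
  destruct (bclass_surj f) as [X ->], (bclass_surj g) as [Y ->], (bclass_surj h) as [Z ->].
  rewrite !Bjoin_bclass, !Bmeet_bclass, Bjoin_bclass; apply fle_covers; intros s t hin.
  apply covers_mem; apply in_prod_terms in hin as (u & v & a & b & h1 & h2 & -> & ->).
  apply in_app_or in h2 as [h2 | h2]; apply in_or_app; [left | right];
    apply in_prod_terms; eauto 10.
Qed.

Definition bdlattice : DLattice :=
  {| dl_poset := bposet; dmeet := Bmeet; djoin := Bjoin; dtop := Btop; dbot := Bbot;
     dmeet_glb := Bmeet_glb; djoin_lub := Bjoin_lub; dtop_top := Btop_top;
     dbot_bot := Bbot_bot; ddistr := Bdistr |}.

(* By De Morgan, [~ \/ (u_i /\ ~ v_i) = /\ (~ u_i \/ v_i)]. *)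
Fixpoint compl_terms (C : list (L * L)) : list (L * L) :=
  match C with
  | [] => [(tp, bt)]
  | (u, v) :: C' => prod_terms [(tp, u); (v, bt)] (compl_terms C')
  end.

Lemma is_compl_single u v :
  is_compl (D := bdlattice) (bclass [(u, v)]) (bclass [(tp, u); (v, bt)]).
Proof.
  split; cbn [dmeet djoin bdlattice]; rewrite ?Bmeet_bclass, ?Bjoin_bclass.
  - apply fle_covers; intros s t hin; apply covers_nil.
    apply in_prod_terms in hin as (u' & v' & a & b & [e | []] & h2 & -> & ->).
    injection e as <- <-; destruct h2 as [e | [e | []]]; injection e as <- <-; lat.
  - apply fle_covers; intros s t [e | []]; injection e as <- <-; cbn [app].
    apply covers_cons; split.
    + apply covers_weaken with tp u; [apply covers_mem; simpl; auto | lat | lat].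
    + apply covers_weaken with v bt; [apply covers_mem; simpl; auto | lat | lat].
Qed.

Lemma is_compl_terms X : is_compl (D := bdlattice) (bclass X) (bclass (compl_terms X)).
Proof.
  induction X as [| [u v] X IH].
  - split; [apply (@meet_le_l bdlattice) | apply (@le_join_r bdlattice)].
  - replace (bclass ((u, v) :: X)) with (Bjoin (bclass [(u, v)]) (bclass X))
      by (rewrite Bjoin_bclass; reflexivity).
    replace (bclass (compl_terms ((u, v) :: X)))
      with (Bmeet (bclass [(tp, u); (v, bt)]) (bclass (compl_terms X)))
      by (rewrite Bmeet_bclass; reflexivity).
    exact (is_compl_join (is_compl_single u v) IH).
Qed.

Definition Bcompl (f : bposet) : bposet := bclass (compl_terms (brepr f)).

Lemma Bcompl_bclass X : Bcompl (bclass X) = bclass (compl_terms X).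
Proof.
  apply (compl_unique (D := bdlattice) (x := bclass X)); [| apply is_compl_terms].
  unfold Bcompl; rewrite (brepr_spec (bclass X)) at 1; apply is_compl_terms.
Qed.

Lemma Bcompl_meet f : Bmeet f (Bcompl f) = Bbot.
Proof.
  apply ple_antisym; [| apply Bbot_bot].
  destruct (bclass_surj f) as [X ->]; rewrite Bcompl_bclass; apply is_compl_terms.
Qed.

Lemma Bcompl_join f : Bjoin f (Bcompl f) = Btop.
Proof.
  apply ple_antisym; [apply Btop_top |].
  destruct (bclass_surj f) as [X ->]; rewrite Bcompl_bclass; apply is_compl_terms.
Qed.

Lemma Bdistr_eq f g h : Bmeet f (Bjoin g h) = Bjoin (Bmeet f g) (Bmeet f h).
Proof.
  apply ple_antisym; [apply Bdistr |].
  apply (@join_le bdlattice); apply (@meet_mono bdlattice);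
    solve [apply ple_refl | apply (@le_join_l bdlattice) | apply (@le_join_r bdlattice)].
Qed.

Definition booleanization : BoolAlg :=
  {| ba_poset := bposet; bmeet := Bmeet; bjoin := Bjoin; btop := Btop; bbot := Bbot;
     bcompl := Bcompl; bmeet_glb := Bmeet_glb; bjoin_lub := Bjoin_lub;
     btop_top := Btop_top; bbot_bot := Bbot_bot; bdistr := Bdistr_eq;
     bcompl_meet := Bcompl_meet; bcompl_join := Bcompl_join |}.

End Booleanization.

Definition order_iso (P Q : Poset) (f : P -> Q) (g : Q -> P) : Prop :=
  (forall x, g (f x) = x) /\ (forall y, f (g y) = y) /\
  (forall x x', ple x x' -> ple (f x) (f x')) /\ (forall y y', ple y y' -> ple (g y) (g y')).

Section OrderIso.
Variables (P Q : Poset) (f : P -> Q) (g : Q -> P).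
Hypothesis H : order_iso f g.

Lemma order_iso_sym : order_iso g f.
Proof. destruct H as (h1 & h2 & h3 & h4); repeat split; auto. Qed.

Lemma order_iso_lub S x : is_lub S x -> is_lub (image f S) (f x).
Proof.
  destruct H as (h1 & h2 & h3 & h4); intros [u l]; split.
  - intros y (s & hs & <-); auto.
  - intros y hy; rewrite <- (h2 y); apply h3, l; intros s hs.
    rewrite <- (h1 s); apply h4, hy; exists s; auto.
Qed.

Lemma order_iso_glb a b c : is_glb2 a b c -> is_glb2 (f a) (f b) (f c).
Proof.
  destruct H as (h1 & h2 & h3 & h4); intros (u1 & u2 & l); split; [| split]; auto.
  intros y ya yb; rewrite <- (h2 y); apply h3, l.
  - rewrite <- (h1 a); auto.
  - rewrite <- (h1 b); auto.
Qed.

Lemma order_iso_top t : is_top t -> is_top (f t).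
Proof. destruct H as (h1 & h2 & h3 & h4); intros ht y; rewrite <- (h2 y); apply h3, ht. Qed.

Lemma order_iso_frame_morphism : frame_morphism f.
Proof. split; [| split]; [apply order_iso_lub | apply order_iso_glb | apply order_iso_top]. Qed.

End OrderIso.

Lemma order_iso_is_frame (P Q : Poset) (f : P -> Q) (g : Q -> P) :
  order_iso f g -> is_frame P -> is_frame Q.
Proof.
  intros H (fl & fg & fd); pose proof H as (h1 & h2 & h3 & h4).
  pose proof (order_iso_sym H) as Hs; split; [| split].
  - intros S; destruct (fl (fun p => S (f p))) as [x hx]; exists (f x).
    apply is_lub_ext with (image f (fun p => S (f p))); [| apply (order_iso_lub H); auto].
    intros s; split; [intros (p & hp & <-); auto | intros hs; exists (g s); rewrite h2; auto].
  - intros a b; destruct (fg (g a) (g b)) as [c hc]; exists (f c).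
    rewrite <- (h2 a), <- (h2 b); apply (order_iso_glb H); auto.
  - intros a S jj mm hj hm.
    pose proof (fd _ _ _ _ (order_iso_lub Hs hj) (order_iso_glb Hs hm)) as hd.
    pose proof (order_iso_lub H hd) as hd'; rewrite h2 in hd'.
    apply is_lub_ext with (2 := hd'); intros y; split.
    + intros (y0 & (s & (s0 & hs0 & <-) & hg) & <-); exists s0; split; auto.
      rewrite <- (h2 a), <- (h2 s0); apply (order_iso_glb H); auto.
    + intros (s0 & hs0 & hg); exists (g y); split; [| apply h2].
      exists (g s0); split; [exists s0; auto | apply (order_iso_glb Hs hg)].
Qed.

Lemma frame_morphism_comp (P Q R : Poset) (f : P -> Q) (g : Q -> R) :
  frame_morphism f -> frame_morphism g -> frame_morphism (fun x => g (f x)).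
Proof.
  intros (a1 & a2 & a3) (b1 & b2 & b3); split; [| split]; auto.
  intros S x hx; apply is_lub_ext with (image g (image f S)); [| apply b1, a1, hx].
  intros y; split.
  - intros (y0 & (x0 & hx0 & <-) & <-); exists x0; auto.
  - intros (x0 & hx0 & <-); exists (f x0); split; auto; exists x0; auto.
Qed.

Lemma frame_morphism_ext (P Q : Poset) (f f' : P -> Q) :
  (forall x, f x = f' x) -> frame_morphism f -> frame_morphism f'.
Proof. intros e; replace f' with f by (apply functional_extensionality; auto); auto. Qed.

Lemma lub_pair_image (P Q : Poset) (f : P -> Q) (a b j : P) :
  (forall S x, is_lub S x -> is_lub (image f S) (f x)) ->
  is_lub (fun x => x = a \/ x = b) j -> is_lub (fun y => y = f a \/ y = f b) (f j).
Proof.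
  intros hf hj; apply is_lub_ext with (image f (fun x => x = a \/ x = b)); [| apply hf, hj].
  intros y; split.
  - intros (x & [-> | ->] & <-); auto.
  - intros [-> | ->]; [exists a | exists b]; auto.
Qed.

Canonical Structure bool_dlattice (A : BoolAlg) : DLattice :=
  {| dl_poset := A; dmeet := @bmeet A; djoin := @bjoin A; dtop := btop A; dbot := bbot A;
     dmeet_glb := @bmeet_glb A; djoin_lub := @bjoin_lub A; dtop_top := @btop_top A;
     dbot_bot := @bbot_bot A;
     ddistr := fun a b c => eq_ind_r (fun x => ple x _) (ple_refl _) (bdistr a b c) |}.

Section BoolAlgTheory.
Variable A : BoolAlg.
Implicit Types x y z : A.

Lemma bcompl_is_compl x : is_compl (D := bool_dlattice A) x (bcompl x).
Proof. split; cbn; [rewrite bcompl_meet | rewrite bcompl_join]; apply ple_refl. Qed.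

Lemma le_join_iff_meet_bcompl x y z : ple x (bjoin y z) <-> ple (bmeet x (bcompl y)) z.
Proof.
  destruct (bcompl_is_compl y) as [hm hj]; split; intros h.
  - via (bmeet (bjoin y z) (bcompl y)); [apply meet_mono; lat |].
    via (bjoin (bmeet y (bcompl y)) (bmeet z (bcompl y))); [apply meet_join_distr_r |].
    apply join_le; [via (bbot A); lat | lat].
  - apply (le_of_cover (y := y) (z := bcompl y)); [via (btop A); lat | lat | via z; lat].
Qed.

Lemma bcompl_bot : bcompl (bbot A) = btop A.
Proof.
  destruct (bcompl_is_compl (bbot A)) as [_ hj].
  apply ple_antisym; [lat |]; via (bjoin (bbot A) (bcompl (bbot A))); lat.
Qed.

Lemma bcompl_bjoin y z : bcompl (bjoin y z) = bmeet (bcompl y) (bcompl z).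
Proof.
  apply (compl_unique (D := bool_dlattice A) (x := bjoin y z)); [apply bcompl_is_compl |].
  apply is_compl_join; apply bcompl_is_compl.
Qed.

End BoolAlgTheory.

Lemma bool_hom_of_lattice_hom (A B : BoolAlg) (f : A -> B) :
  (forall a b, f (bmeet a b) = bmeet (f a) (f b)) ->
  (forall a b, f (bjoin a b) = bjoin (f a) (f b)) ->
  f (btop A) = btop B -> f (bbot A) = bbot B -> bool_hom f.
Proof.
  intros hm hj ht hb; split; [| split; [| split; [| split]]]; auto.
  intros a; apply (compl_unique (D := bool_dlattice B) (x := f a)); [| apply bcompl_is_compl].
  split; cbn; [rewrite <- hm, bcompl_meet, hb | rewrite <- hj, bcompl_join, ht]; apply ple_refl.
Qed.

Lemma order_iso_bool_hom (A B : BoolAlg) (f : A -> B) (g : B -> A) :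
  order_iso f g -> bool_hom f.
Proof.
  intros H; pose proof H as (h1 & h2 & h3 & h4); apply bool_hom_of_lattice_hom.
  - intros a b; apply (glb2_unique (order_iso_glb H (bmeet_glb a b)) (bmeet_glb _ _)).
  - intros a b; apply (lub_unique (lub_pair_image (order_iso_lub H) (bjoin_lub a b))).
    apply bjoin_lub.
  - apply ple_antisym; [apply btop_top |].
    rewrite <- (h2 (btop B)); apply h3, btop_top.
  - apply ple_antisym; [| apply bbot_bot].
    rewrite <- (h2 (bbot B)); apply h3, bbot_bot.
Qed.
(** * The constructible algebra of a frame *)

Section InteriorOfBooleanization.
Variable L : Frame.
Notation D := (frame_dlattice L).
Notation m := (@dmeet D).
Notation j := (@djoin D).
Notation tp := (@dtop D).
Notation bt := (@dbot D).
Notation B := (booleanization L).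
Implicit Types w z u v : D.

Lemma fimp_mp a c : ple (m a (fimp a c)) c.
Proof. via (m (fimp a c) a); [lat | apply fimp_spec; lat]. Qed.

Definition bopen w : B := bclass [(w, bt)].

Lemma bopen_le w (f : B) : ple (bopen w) f <-> forall z, ple (m w (proj1_sig f z)) z.
Proof.
  split; intros h z; specialize (h z); cbn [proj1_sig bopen bclass residual] in *.
  - via (m w (fimp w (j bt z))); [apply meet_mono; [lat | via (m (fimp w (j bt z)) tp); auto; lat] |].
    via (j bt z); [apply fimp_mp | lat].
  - apply le_meet; [apply fimp_spec; via z; [via (m w (proj1_sig f z)); auto; lat | lat] | lat].
Qed.

Lemma bopen_mono u w : ple u w -> ple (bopen u) (bopen w).
Proof.
  intros h; apply bopen_le; intros z; cbn [proj1_sig bopen bclass residual].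
  via (m w (fimp w (j bt z))); [apply meet_mono; lat |].
  via (j bt z); [apply fimp_mp | lat].
Qed.

Lemma bopen_le_inv u w : ple (bopen u) (bopen w) -> ple u w.
Proof.
  intros h; pose proof (proj1 (bopen_le u (bopen w)) h w) as hw.
  cbn [proj1_sig bopen bclass residual] in hw.
  via (m u (m (fimp w (j bt w)) tp)); auto.
  apply le_meet; [lat | apply le_meet; [apply fimp_spec; lat | lat]].
Qed.

(* [bopen (binterior f)] is the interior of [f]. *)
Definition binterior (f : B) : D := fsup (fun w => forall z, ple (m w (proj1_sig f z)) z).

Lemma bopen_binterior_le f : ple (bopen (binterior f)) f.
Proof. apply bopen_le; intros z; apply fmeet_fsup_le; intros w h; apply h. Qed.

Lemma le_binterior w f : ple (bopen w) f -> ple w (binterior f).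
Proof. intros h; apply fsup_ub, bopen_le, h. Qed.

Lemma binterior_bopen u : binterior (bopen u) = u.
Proof.
  apply ple_antisym; [apply bopen_le_inv, bopen_binterior_le | apply le_binterior, ple_refl].
Qed.

Definition Bbox (f : B) : B := bopen (binterior f).

Lemma Bbox_bopen u : Bbox (bopen u) = bopen u.
Proof. unfold Bbox; rewrite binterior_bopen; auto. Qed.

Lemma Bbox_le f : ple (Bbox f) f.
Proof. apply bopen_binterior_le. Qed.

Lemma Bbox_mono f g : ple f g -> ple (Bbox f) (Bbox g).
Proof. intros h; apply bopen_mono, le_binterior; via f; auto; apply Bbox_le. Qed.

Lemma bopen_meet_le p q : ple (bmeet (bopen p) (bopen q)) (bopen (m p q)).
Proof.
  cbn [bmeet booleanization]; unfold bopen; rewrite Bmeet_bclass.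
  apply fle_covers; intros s t hin.
  apply in_prod_terms in hin as (u & v & a & b & [e | []] & [e' | []] & -> & ->).
  injection e as <- <-; injection e' as <- <-.
  apply covers_weaken with (m p q) bt; [apply covers_mem; left; auto | lat | lat].
Qed.

Lemma Bbox_meet f g : Bbox (bmeet f g) = bmeet (Bbox f) (Bbox g).
Proof.
  apply ple_antisym.
  - apply le_meet; apply Bbox_mono; lat.
  - via (bopen (m (binterior f) (binterior g))); [apply bopen_meet_le |].
    apply bopen_mono, le_binterior, le_meet.
    + via (bopen (binterior f)); [apply bopen_mono; lat | apply bopen_binterior_le].
    + via (bopen (binterior g)); [apply bopen_mono; lat | apply bopen_binterior_le].
Qed.

Definition binterior_alg : InteriorAlg :=
  {| ia_ba := B; box := Bbox; box_top := Bbox_bopen tp; box_meet := Bbox_meet;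
     box_deflate := Bbox_le;
     box_idem := fun f => eq_ind_r (fun x => ple (Bbox f) x) (ple_refl _) (Bbox_bopen _) |}.

Definition open_of (u : L) : opens binterior_alg := exist _ (bopen u) (Bbox_bopen u).
Definition of_open (x : opens binterior_alg) : L := binterior (proj1_sig x).

Lemma open_of_iso : order_iso (P := frm_poset L) (Q := opens binterior_alg) open_of of_open.
Proof.
  split; [| split; [| split]].
  - apply binterior_bopen.
  - intros [x hx]; apply proj1_sig_inj; exact hx.
  - intros u w h; apply bopen_mono, h.
  - intros [x hx] [y hy] h; apply le_binterior; via x; [apply bopen_binterior_le | exact h].
Qed.

Lemma binterior_alg_frame : is_frame (opens binterior_alg).
Proof. apply (order_iso_is_frame open_of_iso), frm_is_frame. Qed.

Lemma bcompl_bopen v : bcompl (bopen v) = bclass [(tp, v)].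
Proof.
  apply (compl_unique (D := bool_dlattice B) (x := bopen v)); [apply bcompl_is_compl |].
  split; cbn [dmeet djoin bool_dlattice bmeet bjoin booleanization]; unfold bopen.
  - rewrite Bmeet_bclass; apply fle_covers; intros s t hin.
    apply in_prod_terms in hin as (u' & v' & a & b & [e | []] & [e' | []] & -> & ->).
    injection e as <- <-; injection e' as <- <-; apply covers_nil; lat.
  - rewrite Bjoin_bclass; apply fle_covers; intros s t [e | []]; injection e as <- <-.
    cbn [app]; apply covers_cons; split;
      (apply covers_weaken with tp v; [apply covers_mem; left; auto | lat | lat]).
Qed.

Lemma bclass_single u v : bclass [(u, v)] = bmeet (bopen u) (bcompl (bopen v)).
Proof.
  rewrite bcompl_bopen; unfold bopen; cbn [bmeet booleanization]; rewrite Bmeet_bclass.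
  cbn [prod_terms shift map fst snd app].
  apply bclass_eq; apply fle_covers; intros s t [e | []]; injection e as <- <-.
  - apply covers_weaken with (m u tp) (j bt v); [apply covers_mem; left; auto | lat | lat].
  - apply covers_weaken with u v; [apply covers_mem; left; auto | lat | lat].
Qed.

Lemma binterior_alg_essential : essential binterior_alg.
Proof.
  intros f P hopen hm hj hc ht hb; destruct (bclass_surj f) as [X ->].
  induction X as [| [u v] X IH]; [exact hb |].
  replace (bclass ((u, v) :: X)) with (@bjoin binterior_alg (bclass [(u, v)]) (bclass X))
    by (exact (Bjoin_bclass [(u, v)] X)).
  apply hj; auto; rewrite bclass_single.
  apply hm; [| apply hc]; apply hopen, Bbox_bopen.
Qed.

Definition cons_of_frame : ConsAlg :=
  {| cons_ia := binterior_alg; cons_essential := binterior_alg_essential;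
     cons_frame := binterior_alg_frame |}.

End InteriorOfBooleanization.
Section FrameHomLemmas.
Variables (L M : Frame) (h : FrmHom L M).

Lemma frmh_mono (a b : L) : ple a b -> ple (h a) (h b).
Proof.
  intros hab; assert (g : is_glb2 a b a) by (split; [apply ple_refl | split; auto]).
  apply (proj1 (proj2 (frmh_morph h)) _ _ _ g).
Qed.

Lemma frmh_meet (a b : L) :
  h (dmeet (d := frame_dlattice L) a b) = dmeet (d := frame_dlattice M) (h a) (h b).
Proof.
  apply (glb2_unique (proj1 (proj2 (frmh_morph h)) _ _ _ (fmeet_spec a b)) (fmeet_spec _ _)).
Qed.

Lemma frmh_join (a b : L) :
  h (djoin (d := frame_dlattice L) a b) = djoin (d := frame_dlattice M) (h a) (h b).
Proof.
  apply (lub_unique (lub_pair_image (proj1 (frmh_morph h)) (fsup_spec _))), fsup_spec.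
Qed.

Lemma frmh_top : h (ftop L) = ftop M.
Proof.
  apply ple_antisym; [apply (@le_top (frame_dlattice M)) |].
  apply (proj2 (proj2 (frmh_morph h))); intros y; apply (@le_top (frame_dlattice L)).
Qed.

Lemma frmh_bot : h (fbot L) = fbot M.
Proof.
  apply ple_antisym; [| apply (@bot_le (frame_dlattice M))].
  apply (proj1 (frmh_morph h) _ _ (fsup_spec _)); intros s (x & [] & _).
Qed.

Definition map_pair (p : L * L) : M * M := (h (fst p), h (snd p)).

Lemma covers_map s t C : covers s t C -> covers (h s) (h t) (map map_pair C).
Proof.
  revert s t; induction C as [| [u v] C IH]; intros s t hc; cbn [map].
  - apply covers_nil, frmh_mono, covers_nil, hc.
  - apply covers_cons in hc as [h1 h2]; apply covers_cons; split.
    + rewrite <- frmh_join; apply IH, h1.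
    + rewrite <- frmh_meet; apply IH, h2.
Qed.

Lemma fle_map X Y : fle X Y -> fle (map map_pair X) (map map_pair Y).
Proof.
  rewrite !fle_covers; intros H s t hin; apply in_map_iff in hin as ([a b] & e & hin).
  injection e as <- <-; apply covers_map, H, hin.
Qed.

Lemma map_shift u v C : map map_pair (shift u v C) = shift (h u) (h v) (map map_pair C).
Proof.
  unfold shift; rewrite !map_map; apply map_ext; intros [a b]; unfold map_pair; cbn [fst snd].
  rewrite frmh_meet, frmh_join; reflexivity.
Qed.

Lemma map_prod_terms C E :
  map map_pair (prod_terms C E) = prod_terms (map map_pair C) (map map_pair E).
Proof.
  induction C as [| [u v] C IH]; cbn [prod_terms map]; auto.
  rewrite map_app, IH, map_shift; reflexivity.
Qed.

Definition bmap (f : booleanization L) : booleanization M := bclass (map map_pair (brepr f)).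

Lemma bmap_bclass X : bmap (bclass X) = bclass (map map_pair X).
Proof.
  unfold bmap; pose proof (brepr_spec (bclass X)) as e.
  apply bclass_eq; apply fle_map, fle_of_bclass_eq; auto.
Qed.

Lemma bmap_mono f g : ple f g -> ple (bmap f) (bmap g).
Proof.
  destruct (bclass_surj f) as [X ->], (bclass_surj g) as [Y ->].
  rewrite !bmap_bclass; apply fle_map.
Qed.

Lemma bmap_bool : bool_hom bmap.
Proof.
  apply bool_hom_of_lattice_hom.
  - intros a b; destruct (bclass_surj a) as [X ->], (bclass_surj b) as [Y ->]; cbn.
    rewrite Bmeet_bclass, !bmap_bclass, Bmeet_bclass, map_prod_terms; reflexivity.
  - intros a b; destruct (bclass_surj a) as [X ->], (bclass_surj b) as [Y ->]; cbn.
    rewrite Bjoin_bclass, !bmap_bclass, Bjoin_bclass, map_app; reflexivity.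
  - cbn; unfold Btop; rewrite bmap_bclass; unfold map_pair; cbn.
    rewrite frmh_top, frmh_bot; reflexivity.
  - cbn; unfold Bbot; rewrite bmap_bclass; reflexivity.
Qed.

Lemma bmap_bopen w : bmap (bopen w) = bopen (h w).
Proof. unfold bopen; rewrite bmap_bclass; unfold map_pair; cbn; rewrite frmh_bot; reflexivity. Qed.

Lemma bmap_box (a : binterior_alg L) : ple (bmap (box a)) (box (i := binterior_alg M) (bmap a)).
Proof.
  cbn [box binterior_alg]; unfold Bbox at 1; rewrite bmap_bopen.
  apply bopen_mono, le_binterior; rewrite <- bmap_bopen; apply bmap_mono, bopen_binterior_le.
Qed.

(* On open elements [bmap] is [h], transported along [open_of]. *)
Lemma bmap_frame :
  frame_morphism (open_restr (A := binterior_alg L) (B := binterior_alg M) (f := bmap) bmap_box).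
Proof.
  apply frame_morphism_ext with (fun x => open_of (h (of_open x))).
  - intros x; apply proj1_sig_inj; cbn [open_restr proj1_sig open_of].
    destruct (open_of_iso L) as (_ & e & _); rewrite <- (e x) at 2; cbn [open_of proj1_sig].
    rewrite bmap_bopen; reflexivity.
  - apply frame_morphism_comp; [| apply (order_iso_frame_morphism (open_of_iso M))].
    apply frame_morphism_comp; [apply (order_iso_frame_morphism (order_iso_sym (open_of_iso L))) |].
    apply frmh_morph.
Qed.

Definition cons_map : ConsHom (cons_of_frame L) (cons_of_frame M) :=
  @Build_ConsHom (cons_of_frame L) (cons_of_frame M) bmap bmap_bool bmap_box bmap_frame.

End FrameHomLemmas.
(** * The counit *)

Section InteriorAlgTheory.
Variable A : InteriorAlg.

Lemma box_mono (a b : A) : ple a b -> ple (box a) (box b).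
Proof.
  intros h; assert (e : bmeet a b = a) by (apply ple_antisym; lat).
  rewrite <- e, box_meet; lat.
Qed.

Lemma box_bmeet_open (a b : A) : box a = a -> box b = b -> box (bmeet a b) = bmeet a b.
Proof. intros ha hb; rewrite box_meet, ha, hb; reflexivity. Qed.

Lemma box_bjoin_open (a b : A) : box a = a -> box b = b -> box (bjoin a b) = bjoin a b.
Proof.
  intros ha hb; apply ple_antisym; [apply box_deflate |].
  apply join_le; [rewrite <- ha at 1 | rewrite <- hb at 1]; apply box_mono; lat.
Qed.

Lemma box_bot : box (bbot A) = bbot A.
Proof. apply ple_antisym; [apply box_deflate | lat]. Qed.

End InteriorAlgTheory.

Definition frame_of_cons (A : ConsAlg) : Frame :=
  {| frm_poset := opens A; frm_is_frame := cons_frame A |}.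

Section Counit.
Variable A : ConsAlg.
Notation L := (frame_of_cons A).
Notation m := (@dmeet (frame_dlattice L)).
Notation j := (@djoin (frame_dlattice L)).
Notation tp := (@dtop (frame_dlattice L)).
Notation bt := (@dbot (frame_dlattice L)).

Definition oval (u : L) : A := proj1_sig u.

Lemma oval_meet (u v : L) : oval (m u v) = bmeet (oval u) (oval v).
Proof.
  set (o := exist _ _ (box_bmeet_open (proj2_sig u) (proj2_sig v)) : L).
  assert (g : is_glb2 u v o).
  { split; [| split]; [apply (meet_le_l (D := bool_dlattice A)) |
                       apply (meet_le_r (D := bool_dlattice A)) |].
    intros y h1 h2; apply (le_meet (D := bool_dlattice A)); auto. }
  change (oval (fmeet u v) = oval o); rewrite (glb2_unique (fmeet_spec u v) g); reflexivity.
Qed.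

Lemma oval_join (u v : L) : oval (j u v) = bjoin (oval u) (oval v).
Proof.
  set (o := exist _ _ (box_bjoin_open (proj2_sig u) (proj2_sig v)) : L).
  assert (g : is_lub (fun x => x = u \/ x = v) o).
  { split.
    - intros s [-> | ->]; [apply (le_join_l (D := bool_dlattice A)) |
                           apply (le_join_r (D := bool_dlattice A))].
    - intros y h; apply (join_le (D := bool_dlattice A)); [apply (h u) | apply (h v)]; auto. }
  change (oval (fsup (fun x => x = u \/ x = v)) = oval o).
  rewrite (lub_unique (fsup_spec _) g); reflexivity.
Qed.

Lemma oval_top : oval tp = btop A.
Proof.
  apply ple_antisym; [lat |].
  exact (@le_top (frame_dlattice L) (exist _ _ (box_top A))).
Qed.

Lemma oval_bot : oval bt = bbot A.
Proof.
  apply ple_antisym; [| lat].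
  exact (@bot_le (frame_dlattice L) (exist _ _ (box_bot A))).
Qed.

Fixpoint interp (C : list (L * L)) : A :=
  match C with
  | [] => bbot A
  | (u, v) :: C' => bjoin (bmeet (oval u) (bcompl (oval v))) (interp C')
  end.

Lemma meets_below_interp C w z :
  meets_below C w z <-> ple (bmeet (oval w) (interp C)) (oval z).
Proof.
  unfold meets_below; induction C as [| [u v] C IH]; cbn [interp].
  - split; [intros _; lat | intros _ s t []].
  - split.
    + intros h.
      via (bjoin (bmeet (oval w) (bmeet (oval u) (bcompl (oval v)))) (bmeet (oval w) (interp C)));
        [apply (@meet_join_distr_l (bool_dlattice A)) |].
      apply join_le.
      * assert (h1 := h u v (or_introl eq_refl)); change (ple (oval (m w u)) (oval (j v z))) in h1.
        rewrite oval_meet, oval_join, le_join_iff_meet_bcompl in h1.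
        via (bmeet (bmeet (oval w) (oval u)) (bcompl (oval v))); lat.
      * apply IH; intros s t hin; apply h; right; auto.
    + intros h s t [e | hin].
      * injection e as <- <-; change (ple (oval (m w u)) (oval (j v z))).
        rewrite oval_meet, oval_join; apply le_join_iff_meet_bcompl.
        via (bmeet (oval w) (bjoin (bmeet (oval u) (bcompl (oval v))) (interp C))); auto; lat.
      * apply IH; auto.
        via (bmeet (oval w) (bjoin (bmeet (oval u) (bcompl (oval v))) (interp C))); auto; lat.
Qed.

Lemma covers_interp s t C : covers s t C -> ple (bmeet (oval s) (bcompl (oval t))) (interp C).
Proof.
  revert s t; induction C as [| [u v] C IH]; intros s t hc; cbn [interp].
  - apply covers_nil in hc; change (ple (oval s) (oval t)) in hc.
    destruct (bcompl_is_compl (oval t)) as [hm _].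
    via (bmeet (oval t) (bcompl (oval t))); lat.
  - apply covers_cons in hc as [h1 h2]; apply IH in h1; apply IH in h2.
    rewrite oval_join, bcompl_bjoin in h1; rewrite oval_meet in h2.
    destruct (bcompl_is_compl (oval u)) as [_ hu], (bcompl_is_compl (oval v)) as [_ hv].
    set (x := bmeet (oval s) (bcompl (oval t))).
    apply (@le_of_cover (bool_dlattice A)) with (y := oval u) (z := bcompl (oval u));
      [via (btop A); lat | |].
    + apply (@le_of_cover (bool_dlattice A)) with (y := oval v) (z := bcompl (oval v));
        [via (btop A); lat | |].
      * apply le_join_of_le_r; via (bmeet (bmeet (oval s) (oval v)) (bcompl (oval t))); auto.
        unfold x; lat.
      * apply le_join_of_le_l; unfold x; lat.
    + apply le_join_of_le_r; via (bmeet (oval s) (bmeet (bcompl (oval t)) (bcompl (oval u)))); auto.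
      unfold x; lat.
Qed.

Lemma fle_interp X Y : fle X Y <-> ple (interp X) (interp Y).
Proof.
  split.
  - rewrite fle_covers; intros h; induction X as [| [s t] X IH]; cbn [interp]; [lat |].
    apply join_le; [apply covers_interp, h; left; auto | apply IH; intros; apply h; right; auto].
  - intros h; apply fle_iff; intros w z g; apply meets_below_interp.
    apply meets_below_interp in g; via (bmeet (oval w) (interp Y)); auto; apply meet_mono; lat.
Qed.

Lemma interp_app X Y : interp (X ++ Y) = bjoin (interp X) (interp Y).
Proof.
  induction X as [| [u v] X IH]; cbn [interp app]; [| rewrite IH]; apply ple_antisym; lat.
Qed.

Lemma interp_meet X Y : interp (prod_terms X Y) = bmeet (interp X) (interp Y).
Proof.
  apply ple_antisym.
  - destruct (bclass_glb X Y) as (h1 & h2 & _).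
    apply fle_interp in h1; apply fle_interp in h2; lat.
  - induction X as [| [u v] X IH]; cbn [interp prod_terms]; [lat |].
    rewrite interp_app.
    via (bjoin (bmeet (bmeet (oval u) (bcompl (oval v))) (interp Y)) (bmeet (interp X) (interp Y)));
      [apply (@meet_join_distr_r (bool_dlattice A)) | apply join_mono; auto].
    clear IH; induction Y as [| [a b] Y IHY]; cbn [interp shift map fst snd]; [lat |].
    via (bjoin (bmeet (bmeet (oval u) (bcompl (oval v))) (bmeet (oval a) (bcompl (oval b))))
               (bmeet (bmeet (oval u) (bcompl (oval v))) (interp Y)));
      [apply (@meet_join_distr_l (bool_dlattice A)) | apply join_mono; auto].
    rewrite oval_meet, oval_join, bcompl_bjoin; lat.
Qed.

Lemma interp_bopen (w : L) : interp [(w, bt)] = oval w.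
Proof. cbn [interp]; rewrite oval_bot, bcompl_bot; apply ple_antisym; lat. Qed.

Lemma interp_top : interp [(tp, bt)] = btop A.
Proof. rewrite interp_bopen; apply oval_top. Qed.

Lemma interp_compl X : interp (compl_terms X) = bcompl (interp X).
Proof.
  destruct (is_compl_terms X) as [h1 h2]; cbn [dmeet djoin bdlattice] in h1, h2.
  rewrite Bmeet_bclass in h1; rewrite Bjoin_bclass in h2.
  apply (compl_unique (D := bool_dlattice A) (x := interp X)); [| apply bcompl_is_compl].
  split; cbn.
  - rewrite <- interp_meet; apply (proj1 (fle_interp _ [])), h1.
  - rewrite <- interp_app, <- interp_top; apply (proj1 (fle_interp _ _)), h2.
Qed.

Lemma interp_surj (a : A) : exists X, interp X = a.
Proof.
  apply (@cons_essential A a (fun a => exists X, interp X = a)).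
  - intros x hx; exists [(exist _ x hx : L, bt)]; apply interp_bopen.
  - intros x y [X <-] [Y <-]; exists (prod_terms X Y); apply interp_meet.
  - intros x y [X <-] [Y <-]; exists (X ++ Y); apply interp_app.
  - intros x [X <-]; exists (compl_terms X); apply interp_compl.
  - exists [(tp, bt)]; apply interp_top.
  - exists []; reflexivity.
Qed.

Definition beval (f : booleanization L) : A := interp (brepr f).

Lemma beval_bclass X : beval (bclass X) = interp X.
Proof.
  pose proof (brepr_spec (bclass X)) as e.
  apply ple_antisym; apply fle_interp, fle_of_bclass_eq; auto.
Qed.

Lemma beval_le f g : ple f g <-> ple (beval f) (beval g).
Proof.
  destruct (bclass_surj f) as [X ->], (bclass_surj g) as [Y ->].
  rewrite !beval_bclass; apply fle_interp.
Qed.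

Lemma beval_inj f g : beval f = beval g -> f = g.
Proof. intros e; apply ple_antisym; apply beval_le; rewrite e; apply ple_refl. Qed.

Definition bquote (a : A) : booleanization L :=
  bclass (proj1_sig (constructive_indefinite_description _ (interp_surj a))).

Lemma beval_bquote a : beval (bquote a) = a.
Proof.
  unfold bquote; destruct constructive_indefinite_description as [X e]; cbn.
  rewrite beval_bclass; exact e.
Qed.

Lemma bquote_beval f : bquote (beval f) = f.
Proof. apply beval_inj, beval_bquote. Qed.

Lemma beval_iso : order_iso (P := booleanization L) (Q := A) beval bquote.
Proof.
  split; [| split; [| split]]; [apply bquote_beval | apply beval_bquote | |].
  - intros; apply beval_le; auto.
  - intros y y' h; apply beval_le; rewrite !beval_bquote; auto.
Qed.

Lemma beval_bopen (w : L) : beval (bopen w) = oval w.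
Proof. unfold bopen; rewrite beval_bclass; apply interp_bopen. Qed.

Lemma beval_box (f : booleanization L) : beval (Bbox f) = box (beval f).
Proof.
  apply ple_antisym.
  - unfold Bbox; rewrite beval_bopen; unfold oval at 1; rewrite <- (proj2_sig (binterior f)).
    apply box_mono; rewrite <- beval_bopen; apply beval_le, bopen_binterior_le.
  - set (w := exist _ (box (beval f)) (ple_antisym (box_deflate _) (box_idem _)) : L).
    unfold Bbox; rewrite beval_bopen; change (ple w (binterior f)).
    apply le_binterior, beval_le; rewrite beval_bopen; apply box_deflate.
Qed.

Lemma beval_box_le (a : binterior_alg L) : ple (beval (box a)) (box (beval a)).
Proof. change (ple (beval (Bbox a)) (box (beval a))); rewrite beval_box; apply ple_refl. Qed.

Lemma beval_frame :
  frame_morphism (open_restr (A := binterior_alg L) (B := A) (f := beval) beval_box_le).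
Proof.
  apply frame_morphism_ext with (@of_open L); [| apply (order_iso_frame_morphism (order_iso_sym (open_of_iso L)))].
  intros x; apply proj1_sig_inj; cbn [open_restr proj1_sig of_open].
  destruct (open_of_iso L) as (_ & e & _); rewrite <- (e x) at 2; cbn [open_of proj1_sig].
  rewrite beval_bopen; reflexivity.
Qed.

Definition cons_counit : ConsHom (cons_of_frame L) A :=
  @Build_ConsHom (cons_of_frame L) A beval (order_iso_bool_hom beval_iso) beval_box_le beval_frame.

Lemma bquote_box_le (a : A) : ple (bquote (box a)) (box (i := binterior_alg L) (bquote a)).
Proof.
  apply beval_le; change (ple (beval (bquote (box a))) (beval (Bbox (bquote a)))).
  rewrite beval_box, !beval_bquote; apply ple_refl.
Qed.

Lemma bquote_frame :
  frame_morphism (open_restr (A := A) (B := binterior_alg L) (f := bquote) bquote_box_le).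
Proof.
  apply frame_morphism_ext with (@open_of L); [| apply (order_iso_frame_morphism (open_of_iso L))].
  intros x; apply proj1_sig_inj; cbn [open_restr proj1_sig open_of].
  apply beval_inj; rewrite beval_bopen, beval_bquote; reflexivity.
Qed.

Definition cons_counit_inv : ConsHom A (cons_of_frame L) :=
  @Build_ConsHom A (cons_of_frame L) bquote
    (order_iso_bool_hom (order_iso_sym beval_iso)) bquote_box_le bquote_frame.

End Counit.
Definition frame_map (A B : ConsAlg) (h : ConsHom A B) : FrmHom (frame_of_cons A) (frame_of_cons B) :=
  @Build_FrmHom (frame_of_cons A) (frame_of_cons B) (open_restr (consh_box h)) (consh_frame h).

Definition frame_unit (L : Frame) : FrmHom L (frame_of_cons (cons_of_frame L)) :=
  @Build_FrmHom L (frame_of_cons (cons_of_frame L)) (@open_of L)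
    (order_iso_frame_morphism (open_of_iso L)).

Definition frame_unit_inv (L : Frame) : FrmHom (frame_of_cons (cons_of_frame L)) L :=
  @Build_FrmHom (frame_of_cons (cons_of_frame L)) L (@of_open L)
    (order_iso_frame_morphism (order_iso_sym (open_of_iso L))).

Lemma cons_map_id (L : Frame) (h : FrmHom L L) :
  (forall x, h x = x) -> forall y, cons_map h y = y.
Proof.
  intros hid y; destruct (bclass_surj y) as [X ->]; cbn [consh cons_map].
  rewrite bmap_bclass; f_equal; rewrite <- (map_id X) at 2.
  apply map_ext; intros [a b]; unfold map_pair; cbn [fst snd]; rewrite !hid; reflexivity.
Qed.

Lemma cons_map_comp (L M N : Frame) (h : FrmHom L M) (k : FrmHom M N) (hk : FrmHom L N) :
  (forall x, hk x = k (h x)) -> forall y, cons_map hk y = cons_map k (cons_map h y).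
Proof.
  intros e y; destruct (bclass_surj y) as [X ->]; cbn [consh cons_map].
  rewrite !bmap_bclass, map_map; f_equal.
  apply map_ext; intros [a b]; unfold map_pair; cbn [fst snd]; rewrite !e; reflexivity.
Qed.

Lemma frame_unit_natural (L M : Frame) (h : FrmHom L M) x :
  frame_map (cons_map h) (frame_unit L x) = frame_unit M (h x).
Proof. apply proj1_sig_inj; apply bmap_bopen. Qed.

Lemma interp_consh (A B : ConsAlg) (h : ConsHom A B) (X : list (frame_of_cons A * frame_of_cons A)) :
  h (interp X) = interp (map (map_pair (frame_map h)) X).
Proof.
  destruct (consh_bool h) as (hm & hj & hc & ht & hb).
  induction X as [| [u v] X IH]; cbn [interp map]; [apply hb |].
  rewrite hj, hm, hc, IH; reflexivity.
Qed.

Lemma cons_counit_natural (A B : ConsAlg) (h : ConsHom A B) x :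
  h (cons_counit A x) = cons_counit B (cons_map (frame_map h) x).
Proof.
  destruct (bclass_surj x) as [X ->]; cbn [cons_counit consh cons_map].
  rewrite bmap_bclass, !beval_bclass; apply interp_consh.
Qed.

Theorem theorem4p6 : equivalence_Frm_Cons.
Proof.
  exists cons_of_frame, cons_map, frame_of_cons, frame_map,
    frame_unit, frame_unit_inv, cons_counit, cons_counit_inv.
  split; [exact cons_map_id |].
  split; [exact cons_map_comp |].
  split; [intros A h hid y; apply proj1_sig_inj, hid |].
  split; [intros A B C h k hk e y; apply proj1_sig_inj, e |].
  split; [intros L x; apply binterior_bopen |].
  split; [intros L y; apply (proj1 (proj2 (open_of_iso L))) |].
  split; [exact frame_unit_natural |].
  split; [intros A x; apply bquote_beval |].
  split; [intros A y; apply beval_bquote |].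
  exact cons_counit_natural.
Qed.
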